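(* The following two statements are equivalent: (a) (Petersen coloring conjecture) For every bridgeless cubic graph $G$ we have $P \prec G$, where $P$ is the Petersen graph. (b) There exists a sublinear function $f:\mathbb{N}\to\mathbb{N}$ such that every bridgeless cubic graph $G$ (not necessarily connected) admits a proper $5$-edge-coloring $c$ with $|N_G(c)|\le f(|V(G)|)$.
   Context: Graphs are finite, undirected, loopless, and may contain parallel edges. For a vertex $v$ of a graph $G$, $\partial_G(v)$ denotes the set of edges incident to $v$. For cubic graphs $G,H$, an $H$-coloring of $G$ is a map $\phi:E(G)\to E(H)$ such that for every $v\in V(G)$ there is $w\in V(H)$ with $\phi(\partial_G(v))=\partial_H(w)$; we write $H\prec G$ if $G$ has an $H$-coloring. A proper $k$-edge-coloring of $G$ is a map $c:E(G)\to\{1,\dots,k\}$ with adjacent edges receiving different colors. For such $c$ and a vertex $v$, $S_c(v)$ is the set of colors on edges incident to $v$. An edge $uv$ of a cubic graph is poor if $|S_c(u)\cup S_c(v)|=3$, rich if $|S_c(u)\cup S_c(v)|=5$, and abnormal if it is neither poor nor rich. $N_G(c)$ denotes the set of abnormal edges of $G$ with respect to $c$. A function $f:\mathbb{N}\to\mathbb{N}$ is sublinear if $\lim_{n\to\infty} f(n)/n=0$. It may be used that (Jaeger) a cubic graph $G$ satisfies $P\prec G$ iff $G$ admits a proper $5$-edge-coloring with no abnormal edges, and that it suffices to prove the Petersen coloring conjecture for 2-connected cubic graphs. *)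

From mathcomp Require Import all_boot all_order all_algebra.
Set Implicit Arguments. Unset Strict Implicit. Unset Printing Implicit Defensive.
Import Order.TTheory GRing.Theory Num.Theory.

(* A finite, undirected, loopless multigraph: vertex and edge finTypes, each
   edge has two (distinct) endpoints; parallel edges are allowed. *)
Record multigraph := Multigraph {
  V : finType;
  E : finType;
  src : E -> V;
  tgt : E -> V;
  loopless : forall e, src e != tgt e }.

Section Graphs.
Variable G : multigraph.

Definition incident (v : V G) (e : E G) : bool := (src e == v) || (tgt e == v).

Definition bd (v : V G) : {set E G} := [set e | incident v e].

Definition cubic : Prop := forall v : V G, #|bd v| = 3.

Definition adj_minus (e : E G) : rel (V G) := fun x y =>
  [exists e' : E G, (e' != e) &&
     (((src e' == x) && (tgt e' == y)) || ((src e' == y) && (tgt e' == x)))].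

Definition is_bridge (e : E G) : bool := ~~ connect (adj_minus e) (src e) (tgt e).

Definition bridgeless : Prop := forall e : E G, ~~ is_bridge e.

Definition proper_coloring (k : nat) (c : E G -> 'I_k) : Prop :=
  forall (v : V G) (e1 e2 : E G),
    incident v e1 -> incident v e2 -> e1 != e2 -> c e1 != c e2.

Definition Sc (k : nat) (c : E G -> 'I_k) (v : V G) : {set 'I_k} := c @: bd v.

Definition edge_colors_union (k : nat) (c : E G -> 'I_k) (e : E G) : nat :=
  #|Sc c (src e) :|: Sc c (tgt e)|.

Definition poor (k : nat) (c : E G -> 'I_k) (e : E G) : bool :=
  edge_colors_union c e == 3.
Definition rich (k : nat) (c : E G -> 'I_k) (e : E G) : bool :=
  edge_colors_union c e == 5.
Definition abnormal (k : nat) (c : E G -> 'I_k) (e : E G) : bool :=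
  ~~ poor c e && ~~ rich c e.

Definition abnormal_edges (k : nat) (c : E G -> 'I_k) : {set E G} :=
  [set e | abnormal c e].

End Graphs.

Definition H_coloring (H G : multigraph) (phi : E G -> E H) : Prop :=
  forall v : V G, exists w : V H, phi @: bd v = bd w.

Definition prec (H G : multigraph) : Prop := exists phi, @H_coloring H G phi.

(* The Petersen graph: outer 5-cycle 0..4, spokes i -- i+5, inner pentagram
   5-7-9-6-8-5. *)
Definition pet_src_list : seq nat := [:: 0;1;2;3;4; 0;1;2;3;4; 5;7;9;6;8].
Definition pet_tgt_list : seq nat := [:: 1;2;3;4;0; 5;6;7;8;9; 7;9;6;8;5].
Definition pet_src (e : 'I_15) : 'I_10 := inord (nth 0 pet_src_list e).
Definition pet_tgt (e : 'I_15) : 'I_10 := inord (nth 0 pet_tgt_list e).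

Lemma pet_loopless_b : [forall e, pet_src e != pet_tgt e].
Proof. by apply/forallP; case; do 15! (case; first by move=> ?; apply/eqP; move/(congr1 val); rewrite /= !inordK). Qed.

Lemma pet_loopless : forall e, pet_src e != pet_tgt e.
Proof. exact/forallP/pet_loopless_b. Qed.

Definition Petersen : multigraph := @Multigraph 'I_10 'I_15 pet_src pet_tgt pet_loopless.

(* f : N -> N is sublinear: lim f(n)/n = 0 (epsilon-N form, rational eps) *)
Definition sublinear (f : nat -> nat) : Prop :=
  forall eps : rat, (0 < eps)%R ->
    exists N : nat, forall n : nat, (N < n)%N -> ((f n)%:R < eps * n%:R)%R.

From mathcomp Require Import all_boot all_order all_algebra.
Set Implicit Arguments. Unset Strict Implicit. Unset Printing Implicit Defensive.
Import Order.TTheory GRing.Theory Num.Theory.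

(* The proof rests on Jaeger's characterisation: a cubic graph G satisfies
   P < G iff G has a proper 5-edge-coloring without abnormal edges ("normal"
   coloring).  We prove it through one explicit normal 5-edge-coloring of the
   Petersen graph P, whose relevant properties are checked by computation:
   the pullback of it along a P-coloring is normal, and conversely a normal
   coloring of G sends each vertex to the vertex of P carrying the same three
   colors.
   (a) -> (b) then holds with f = 0.  For (b) -> (a), given G on n > 0
   vertices, sublinearity yields k with f(k n) < k; the disjoint union of k
   copies of G is cubic and bridgeless, so it has a proper 5-edge-coloring
   with fewer than k abnormal edges, hence one copy is normally colored and
   Jaeger's theorem applies to it. *)

Lemma incident_src (G : multigraph) (e : E G) : e \in bd (src e).
Proof. by rewrite inE /incident eqxx. Qed.

Lemma incident_tgt (G : multigraph) (e : E G) : e \in bd (tgt e).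
Proof. by rewrite inE /incident eqxx orbT. Qed.

Lemma proper_inj (G : multigraph) k (c : E G -> 'I_k) (v : V G) :
  proper_coloring c -> {in bd v &, injective c}.
Proof.
move=> c_proper e1 e2; rewrite !inE => e1v e2v ce12; apply/eqP/contraT => e12.
by move: (c_proper v e1 e2 e1v e2v e12); rewrite ce12 eqxx.
Qed.

Lemma card_Sc (G : multigraph) k (c : E G -> 'I_k) (v : V G) :
  cubic G -> proper_coloring c -> #|Sc c v| = 3.
Proof. by move=> G_cubic c_proper; rewrite card_in_imset ?G_cubic //; exact: proper_inj. Qed.

(* Deciding statements about 'I_n by evaluation: the finType enumeration of
   'I_n does not reduce, so we use this explicit list of all ordinals. *)

Fixpoint ord_list n : seq 'I_n :=
  if n is n'.+1 then ord0 :: map (lift ord0) (ord_list n') else [::].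

Lemma val_ord_list n : map val (ord_list n) = iota 0 n.
Proof.
elim: n => [//|n IH] /=; congr (_ :: _).
by rewrite -map_comp (@eq_map _ _ _ (addn 1 \o val)) // map_comp IH -iotaDl.
Qed.

Lemma mem_ord_list n (i : 'I_n) : i \in ord_list n.
Proof. by rewrite -(mem_map val_inj) val_ord_list mem_iota ltn_ord. Qed.

Lemma all_ord_list n (P : pred 'I_n) : all P (ord_list n) -> forall i, P i.
Proof. by move/allP=> Pl i; apply/Pl/mem_ord_list. Qed.

Lemma has_ord_list n (P : pred 'I_n) : has P (ord_list n) -> exists i, P i.
Proof. by case/hasP=> i _ Pi; exists i. Qed.

Lemma card_ord_list n (A : {pred 'I_n}) : #|A| = count (mem A) (ord_list n).
Proof.
have uniqA : uniq (filter (mem A) (ord_list n)).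
  by rewrite filter_uniq // -(map_inj_uniq val_inj) val_ord_list iota_uniq.
rewrite -size_filter -(card_uniqP uniqA).
by apply: eq_card => i; rewrite mem_filter mem_ord_list andbT.
Qed.

(* A normal 5-edge-coloring of the Petersen graph, listed in the edge order
   of [pet_src_list]/[pet_tgt_list], together with the incidence and color
   relations on the underlying naturals, which reduce by evaluation. *)

Definition pet_color_list : seq nat := [:: 0;1;2;3;4; 2;3;4;0;1; 3;0;2;4;1].
Definition pet_color (f : nat) : nat := nth 0 pet_color_list f.
Definition pet_incident (x f : nat) : bool :=
  (nth 0 pet_src_list f == x) || (nth 0 pet_tgt_list f == x).
Definition pet_sees (x i : nat) : bool :=
  has (fun f => pet_incident x f && (pet_color f == i)) (iota 0 15).

Definition cP (f : E Petersen) : 'I_5 := inord (pet_color f).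

Lemma pet_color_lt f : pet_color f < 5.
Proof. by rewrite /pet_color; do 15! (case: f => [//|f]); case: f. Qed.

Lemma pet_src_lt f : nth 0 pet_src_list f < 10.
Proof. by do 15! (case: f => [//|f]); case: f. Qed.

Lemma pet_tgt_lt f : nth 0 pet_tgt_list f < 10.
Proof. by do 15! (case: f => [//|f]); case: f. Qed.

Lemma val_cP f : val (cP f) = pet_color f.
Proof. exact/inordK/pet_color_lt. Qed.

Lemma incident_petersen (x : V Petersen) (f : E Petersen) :
  incident x f = pet_incident x f.
Proof.
by rewrite /incident /pet_incident -!val_eqE /= !inordK ?pet_src_lt ?pet_tgt_lt.
Qed.

Lemma Sc_petersen (x : V Petersen) (i : 'I_5) : (i \in Sc cP x) = pet_sees x i.
Proof.
apply/imsetP/hasP => [[f]|[f]].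
  rewrite inE incident_petersen => xf ->.
  by exists (val f); rewrite ?mem_iota ?ltn_ord //= xf val_cP eqxx.
rewrite mem_iota /= => f_lt /andP[xf /eqP fi].
by exists (Ordinal f_lt : E Petersen); rewrite ?inE ?incident_petersen //; apply/val_inj; rewrite val_cP.
Qed.

Lemma petersen_degrees_computed : all (fun x : 'I_10 =>
  count (fun f : 'I_15 => pet_incident x f) (ord_list 15) == 3) (ord_list 10).
Proof. by vm_compute. Qed.

Lemma cP_proper_computed : all (fun x : 'I_10 => all (fun f1 : 'I_15 =>
  all (fun f2 : 'I_15 =>
    [&& pet_incident x f1, pet_incident x f2 & val f1 != val f2] ==>
    (pet_color f1 != pet_color f2)) (ord_list 15)) (ord_list 15)) (ord_list 10).
Proof. by vm_compute. Qed.

Lemma cP_normal_computed : all (fun x : 'I_10 => all (fun y : 'I_10 =>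
  all (fun f : 'I_15 => pet_incident x f && pet_incident y f ==>
    let n := count (fun i : 'I_5 => pet_sees x i || pet_sees y i) (ord_list 5) in
    (n == 3) || (n == 5)) (ord_list 15)) (ord_list 10)) (ord_list 10).
Proof. by vm_compute. Qed.

Lemma cP_triples_computed : all (fun a : 'I_5 => all (fun b : 'I_5 =>
  all (fun c : 'I_5 => [&& a != b, a != c & b != c] ==>
    has (fun x : 'I_10 => all (fun i : 'I_5 =>
      pet_sees x i == [|| i == a, i == b | i == c]) (ord_list 5)) (ord_list 10))
  (ord_list 5)) (ord_list 5)) (ord_list 5).
Proof. by vm_compute. Qed.

Lemma cP_rich_pairs_computed : all (fun x : 'I_10 => all (fun y : 'I_10 =>
  all (fun i : 'I_5 =>
    [&& count (fun j : 'I_5 => pet_sees x j && pet_sees y j) (ord_list 5) == 1,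
        pet_sees x i & pet_sees y i] ==>
    has (fun f : 'I_15 => [&& pet_incident x f, pet_incident y f & pet_color f == i])
      (ord_list 15)) (ord_list 5)) (ord_list 10)) (ord_list 10).
Proof. by vm_compute. Qed.

Lemma petersen_cubic : cubic Petersen.
Proof.
move=> x; have /eqP <- := all_ord_list petersen_degrees_computed x.
by rewrite card_ord_list; apply: eq_count => f; rewrite /= inE incident_petersen.
Qed.

Lemma cP_proper : proper_coloring cP.
Proof.
move=> x f1 f2; rewrite !incident_petersen => xf1 xf2 f12.
have := all_ord_list (all_ord_list (all_ord_list cP_proper_computed x) f1) f2.
by rewrite xf1 xf2 val_eqE f12 -!val_cP val_eqE.
Qed.

Lemma cP_normal (x y : V Petersen) (f : E Petersen) :
  incident x f -> incident y f ->
  (#|Sc cP x :|: Sc cP y| == 3) || (#|Sc cP x :|: Sc cP y| == 5).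
Proof.
rewrite !incident_petersen => xf yf.
have := all_ord_list (all_ord_list (all_ord_list cP_normal_computed x) y) f.
rewrite xf yf implyTb card_ord_list.
rewrite (@eq_count _ _ (fun i : 'I_5 => pet_sees x i || pet_sees y i)) //.
by move=> i; rewrite /= inE !Sc_petersen.
Qed.

Lemma card3P (T : finType) (A : {set T}) : #|A| = 3 ->
  exists a b c, [&& a != b, a != c & b != c] /\ A =i [:: a; b; c].
Proof.
rewrite cardE; have := mem_enum (mem A); have := enum_uniq (mem A).
case: (enum A) => [|a [|b [|c [|? ?]]]] //=.
rewrite !inE !negb_or => /andP[/andP[ab ac] /andP[bc _]] memA _.
by exists a, b, c; split; [rewrite ab ac bc | move=> i; rewrite memA].
Qed.

Lemma cP_realizes (T : {set 'I_5}) : #|T| = 3 -> exists x, Sc cP x = T.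
Proof.
case/card3P=> a [b [c [abc memT]]].
have := all_ord_list (all_ord_list (all_ord_list cP_triples_computed a) b) c.
rewrite abc implyTb => /has_ord_list[x /all_ord_list xT]; exists x; apply/setP => i.
by rewrite memT Sc_petersen (eqP (xT i)) !inE.
Qed.

Lemma cP_rich_pair (x y : V Petersen) (i : 'I_5) :
  #|Sc cP x :&: Sc cP y| = 1 -> i \in Sc cP x -> i \in Sc cP y ->
  exists f, [&& incident x f, incident y f & cP f == i].
Proof.
move=> xy1 ix iy.
have := all_ord_list (all_ord_list (all_ord_list cP_rich_pairs_computed x) y) i.
rewrite -!Sc_petersen ix iy -(@eq_count _ (mem (Sc cP x :&: Sc cP y))); last first.
  by move=> j; rewrite /= inE !Sc_petersen.
rewrite -card_ord_list xy1 eqxx implyTb => /has_ord_list[f /and3P[xf yf fi]].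
by exists f; rewrite !incident_petersen xf yf -val_eqE val_cP.
Qed.

Definition normal_coloring (G : multigraph) (c : E G -> 'I_5) : Prop :=
  proper_coloring c /\ abnormal_edges c = set0.

Lemma normal_edgeE (G : multigraph) (c : E G -> 'I_5) (e : E G) :
  (e \notin abnormal_edges c) = (edge_colors_union c e == 3) || (edge_colors_union c e == 5).
Proof. by rewrite inE /abnormal /poor /rich negb_and !negbK. Qed.

Lemma pullback_normal (G : multigraph) (phi : E G -> E Petersen) :
  cubic G -> H_coloring phi -> normal_coloring (fun e => cP (phi e)).
Proof.
move=> G_cubic phi_col.
have phi_inc v w e : phi @: bd v = bd w -> e \in bd v -> incident w (phi e).
  by move=> vw ev; have := imset_f phi ev; rewrite vw inE.
have Sc_phi v w : phi @: bd v = bd w -> Sc (fun e => cP (phi e)) v = Sc cP w.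
  by move=> vw; rewrite /Sc -vw -imset_comp.
split.
  move=> v e1 e2 ve1 ve2 e12; have [w vw] := phi_col v.
  have phi_inj : {in bd v &, injective phi}.
    by apply/imset_injP; rewrite vw petersen_cubic G_cubic.
  apply: (cP_proper (phi_inc _ _ _ vw _) (phi_inc _ _ _ vw _)); rewrite ?inE //.
  by apply: contra e12 => /eqP/phi_inj ->; rewrite ?inE.
apply/setP => e; rewrite [RHS]inE; apply/negbTE; rewrite normal_edgeE /edge_colors_union.
have [[x ex] [y ey]] := (phi_col (src e), phi_col (tgt e)).
rewrite (Sc_phi _ _ ex) (Sc_phi _ _ ey).
exact: cP_normal (phi_inc _ _ _ ex (incident_src e)) (phi_inc _ _ _ ey (incident_tgt e)).
Qed.

Definition pet_vertex (T : {set 'I_5}) : V Petersen :=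
  odflt ord0 [pick x | Sc cP x == T].

Lemma Sc_pet_vertex (T : {set 'I_5}) : #|T| = 3 -> Sc cP (pet_vertex T) = T.
Proof.
move=> T3; rewrite /pet_vertex; case: pickP => [x /eqP //|noT].
by have [x /eqP] := cP_realizes T3; rewrite noT.
Qed.

Lemma pet_edge_between (T1 T2 : {set 'I_5}) (i : 'I_5) :
  #|T1| = 3 -> #|T2| = 3 -> (#|T1 :|: T2| == 3) || (#|T1 :|: T2| == 5) ->
  i \in T1 -> i \in T2 ->
  exists f, [&& incident (pet_vertex T1) f, incident (pet_vertex T2) f & cP f == i].
Proof.
move=> T1_3 T2_3 /orP[]/eqP T12 iT1 iT2.
  have union_eq (A : {set 'I_5}) : A \subset T1 :|: T2 -> #|A| = 3 -> A = T1 :|: T2.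
    by move=> sA A3; apply/eqP; rewrite eqEcard sA T12 A3.
  have <- : T1 = T2.
    by rewrite [LHS]union_eq ?subsetUl // [RHS]union_eq ?subsetUr.
  have /imsetP[f] : i \in Sc cP (pet_vertex T1) by rewrite Sc_pet_vertex.
  by rewrite inE => T1f ->; exists f; rewrite T1f eqxx.
have T12_1 : #|T1 :&: T2| = 1.
  by apply/eqP; rewrite -(eqn_add2l 5) -{1}T12 cardsUI T1_3 T2_3.
by apply: cP_rich_pair; rewrite ?Sc_pet_vertex.
Qed.

(* A normal coloring c of a cubic graph G induces a P-coloring: each vertex
   goes to the Petersen vertex with the same color set and each edge to the
   Petersen edge of the same color between the images of its ends. *)
Lemma normal_prec (G : multigraph) (c : E G -> 'I_5) :
  cubic G -> normal_coloring c -> prec Petersen G.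
Proof.
move=> G_cubic [c_proper c_normal].
pose w v := pet_vertex (Sc c v).
have image_edge e :
    exists f, [&& incident (w (src e)) f, incident (w (tgt e)) f & cP f == c e].
  have : e \notin abnormal_edges c by rewrite c_normal inE.
  rewrite normal_edgeE => e_normal.
  by apply: pet_edge_between; rewrite ?card_Sc ?imset_f ?incident_src ?incident_tgt.
pose phi e := odflt ord0 [pick f | [&& incident (w (src e)) f,
                                       incident (w (tgt e)) f & cP f == c e]].
have phi_spec e :
    [&& incident (w (src e)) (phi e), incident (w (tgt e)) (phi e) & cP (phi e) == c e].
  rewrite /phi; case: pickP => [f //|none].
  by have [f] := image_edge e; rewrite none.
have cP_phi e : cP (phi e) = c e by case/and3P: (phi_spec e) => _ _ /eqP.
exists phi => v; exists (w v).
have phi_inj : {in bd v &, injective phi}.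
  move=> e1 e2 ve1 ve2 /(congr1 cP); rewrite !cP_phi.
  exact: (proper_inj c_proper ve1 ve2).
apply/eqP; rewrite eqEcard petersen_cubic card_in_imset // G_cubic leqnn andbT.
apply/subsetP => _ /imsetP[e ve ->]; rewrite inE; move: ve; rewrite inE /incident.
by case/orP=> /eqP <-; case/and3P: (phi_spec e).
Qed.

Lemma prec_petersenP (G : multigraph) :
  cubic G -> prec Petersen G <-> exists c : E G -> 'I_5, normal_coloring c.
Proof.
move=> G_cubic; split; last by case=> c; apply: normal_prec.
by case=> phi phi_col; exists (fun e => cP (phi e)); apply: pullback_normal.
Qed.

Section Copies.
Variables (k : nat) (G : multigraph).

Definition copy_src (p : 'I_k * E G) : 'I_k * V G := (p.1, src p.2).
Definition copy_tgt (p : 'I_k * E G) : 'I_k * V G := (p.1, tgt p.2).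

Lemma copies_loopless (p : 'I_k * E G) : copy_src p != copy_tgt p.
Proof. by rewrite xpair_eqE eqxx loopless. Qed.

Definition copies : multigraph :=
  @Multigraph ('I_k * V G)%type ('I_k * E G)%type copy_src copy_tgt copies_loopless.

Lemma incident_copies (i j : 'I_k) (v : V G) (e : E G) :
  incident (G := copies) (i, v) (j, e) = (j == i) && incident v e.
Proof. by rewrite /incident /= !xpair_eqE; case: (j == i). Qed.

Lemma bd_copies (i : 'I_k) (v : V G) : bd (G := copies) (i, v) = pair i @: bd v.
Proof.
apply/setP => -[j e]; rewrite inE incident_copies.
apply/andP/imsetP => [[/eqP -> ve]|[e' ve' [-> ->]]]; first by exists e; rewrite ?inE.
by rewrite inE in ve'.
Qed.

Lemma card_copies : #|V copies| = k * #|V G|.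
Proof. by rewrite card_prod card_ord. Qed.

Lemma copies_cubic : cubic G -> cubic copies.
Proof. by move=> G_cubic [i v]; rewrite bd_copies card_imset ?G_cubic //; move=> e1 e2 []. Qed.

Lemma copies_path (i : 'I_k) (e : E G) (x : V G) (p : seq (V G)) :
  path (adj_minus e) x p -> path (adj_minus (G := copies) (i, e)) (i, x) (map (pair i) p).
Proof.
elim: p x => [//|y p IH] x /= /andP[/existsP[e' /andP[e'e xy]] /IH ->].
by rewrite andbT; apply/existsP; exists (i, e'); rewrite /= !xpair_eqE eqxx e'e.
Qed.

Lemma copies_bridgeless : bridgeless G -> bridgeless copies.
Proof.
move=> G_bridgeless [i e]; rewrite /is_bridge negbK.
change (connect (adj_minus (G := copies) (i, e)) (i, src e) (i, tgt e)).
have /negPn/connectP[p ep ->] := G_bridgeless e.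
by apply/connectP; exists (map (pair i) p); rewrite ?last_map //; exact: copies_path.
Qed.

Variable c : E copies -> 'I_5.

Definition copy_coloring (i : 'I_k) (e : E G) : 'I_5 := c (i, e).

Lemma Sc_copies (i : 'I_k) (v : V G) : Sc c (i, v) = Sc (copy_coloring i) v.
Proof. by rewrite /Sc bd_copies -imset_comp. Qed.

Lemma abnormal_copies (i : 'I_k) (e : E G) : abnormal c (i, e) = abnormal (copy_coloring i) e.
Proof. by rewrite /abnormal /poor /rich /edge_colors_union /= !Sc_copies. Qed.

Lemma proper_copy_coloring (i : 'I_k) : proper_coloring c -> proper_coloring (copy_coloring i).
Proof.
move=> c_proper v e1 e2 ve1 ve2 e12.
by apply: (c_proper (i, v)); rewrite ?incident_copies ?eqxx ?xpair_eqE ?negb_and ?e12 ?orbT.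
Qed.

Lemma normal_copy : proper_coloring c -> #|abnormal_edges c| < k ->
  exists i, normal_coloring (copy_coloring i).
Proof.
move=> c_proper few.
case: (pickP (fun i => abnormal_edges (copy_coloring i) == set0)) => [i /eqP|none].
  by exists i; split; first exact: proper_copy_coloring.
have : [set: 'I_k] \subset fst @: abnormal_edges c.
  apply/subsetP => i _; have /set0Pn[e ie] := negbT (none i).
  by apply/imsetP; exists (i, e); rewrite // inE abnormal_copies -(in_set (abnormal _)).
move/subset_leq_card/leq_trans/(_ (leq_imset_card _ _)).
by rewrite cardsT card_ord leqNgt few.
Qed.

End Copies.

Lemma sublinear0 : sublinear (fun _ => 0).
Proof. by move=> eps eps_gt0; exists 0 => n n_gt0; rewrite mulr_gt0 ?ltr0n. Qed.

Lemma sublinear_scale (f : nat -> nat) (n : nat) :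
  sublinear f -> 0 < n -> exists k, f (k * n) < k.
Proof.
move=> f_sub n_gt0.
have n_pos : (0 < n%:R :> rat)%R by rewrite ltr0n.
have [N fN] := f_sub (1 / n%:R)%R (divr_gt0 ltr01 n_pos).
exists N.+1; rewrite -(ltr_nat rat).
have -> : (N.+1%:R = 1 / n%:R * (N.+1 * n)%:R :> rat)%R.
  by rewrite natrM mulrCA div1r mulVf ?mulr1 // lt0r_neq0.
by apply: fN; exact: leq_pmulr.
Qed.

Lemma prec_no_vertices (G : multigraph) : #|V G| = 0 -> prec Petersen G.
Proof. by move=> G0; exists (fun _ => ord0) => v; move: (card0_eq G0 v); rewrite inE. Qed.

Theorem mainTheorem1 :
  (forall G : multigraph, cubic G -> bridgeless G -> prec Petersen G)
  <->
  (exists f : nat -> nat, sublinear f /\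
     forall G : multigraph, cubic G -> bridgeless G ->
       exists c : E G -> 'I_5,
         proper_coloring c /\ #|abnormal_edges c| <= f #|V G|).
Proof.
split=> [petersen_coloring | [f [f_sub f_bound]] G G_cubic G_bridgeless].
  exists (fun _ => 0); split; first exact: sublinear0.
  move=> G G_cubic G_bridgeless.
  have /(prec_petersenP G_cubic)[c [c_proper c_normal]] := petersen_coloring G G_cubic G_bridgeless.
  by exists c; rewrite c_normal cards0.
have [G0|n_gt0] := posnP #|V G|; first exact: prec_no_vertices.
have [k few] := sublinear_scale f_sub n_gt0.
have [c [c_proper c_bound]] :=
  f_bound _ (@copies_cubic k G G_cubic) (@copies_bridgeless k G G_bridgeless).
rewrite card_copies in c_bound.
have [i c_i_normal] := normal_copy c_proper (leq_ltn_trans c_bound few).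
by apply/(prec_petersenP G_cubic); exists (copy_coloring c i).
Qed.
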